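(* Let $N\ge 1$ senders each receive an equiprobable binary input $x_i\in\{0,1\}$, and let $\theta$ satisfy $2\tan^{-1}(2^{1/N}-1)\le\theta<\pi/2$. If each sender $S_i$ sends the qubit state $|\psi_{x_i}\rangle=\cos(\theta/2)|0\rangle+(-1)^{x_i}\sin(\theta/2)|1\rangle$, then there is a $2^N$-outcome measurement $\{M_{\vec z}\}$ on the receiver's $N$ qubits with $\langle\psi_{\vec x}|M_{\vec x}|\psi_{\vec x}\rangle=0$ for all $\vec x\in\{0,1\}^N$ (where $|\psi_{\vec x}\rangle=|\psi_{x_1}\rangle\otimes\cdots\otimes|\psi_{x_N}\rangle$), so that the quantum success metric is $\widetilde{\mathcal S}_Q=1$; each sender's pair of states has anti-distinguishability $A^Q=\tfrac12(1+\sin\theta)$; while any classical strategy achieving $\widetilde{\mathcal S}_C=1$ with a common anti-distinguishability bound $A$ for all senders requires $A^C=1$. Consequently $$\left(\frac{A^C}{A^Q}\right)^N=\left(\frac{2}{1+\sin\theta}\right)^N>1.$$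
   Context: Setting: $N$ independent senders, one receiver with no input. For quantum communication, sender $S_i$ sends a state $\rho_{x_i}$ and the receiver measures a POVM $\{M_{z}\}$ on $\bigotimes_i\rho_{x_i}$, with $z$ ranging over input tuples $\vec x$. The success metric for anti-distinguishing distributed inputs is $\widetilde{\mathcal S}=1-\sum_{\vec x}q_{\vec x}\,p(z=\vec x|\vec x)$ with $q_{\vec x}=\prod_i q_{x_i}$ (here $q_{x_i}=1/2$). The anti-distinguishability of a set of states $\{\rho_{x}\}$ with prior $\{q_x\}$ is $1-\min_{\{M_z\}}\sum_z\min_x q_x\operatorname{Tr}(\rho_xM_z)$, the minimum over POVMs with as many outcomes as inputs. Classically, sender $S_i$ encodes $x_i$ into a message $m_i$ via $p_e(m_i|x_i)$ with anti-distinguishability $1-\sum_{m_i}\min_{x_i}q_{x_i}p_e(m_i|x_i)$, and the receiver decodes with $p_d(z|\vec m)$. $A^C$ is the minimal common value $A$ of the senders' anti-distinguishabilities for which a classical strategy achieves the target value of $\widetilde{\mathcal S}$ (here $1$); $A^Q$ is the common anti-distinguishability of each sender's quantum states in the quantum protocol achieving the same value. *)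

From HB Require Import structures.
From mathcomp Require Import all_boot all_order all_algebra.
From mathcomp Require Import all_classical all_reals.
From mathcomp Require Import exp trigo.
From mathcomp Require Import complex.

Set Implicit Arguments.
Unset Strict Implicit.
Unset Printing Implicit Defensive.
Import Order.TTheory GRing.Theory Num.Theory.
Local Open Scope ring_scope.
Local Open Scope classical_set_scope.

Section Defs.
Variable R : realType.
Local Notation C := R[i].

Definition fmin (X : finType) (f : X -> R) : R := inf (range f).

Definition op (T : finType) := T -> T -> C.

Definition expect (T : finType) (v : T -> C) (A : op T) : C :=
  \sum_(i : T) \sum_(j : T) conjc (v i) * A i j * v j.

Definition psd (T : finType) (A : op T) : Prop :=
  (forall i j, A j i = conjc (A i j)) /\ (forall v : T -> C, 0 <= expect v A).

Definition povm (Z T : finType) (M : Z -> op T) : Prop :=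
  (forall z, psd (M z)) /\
  (forall i j : T, \sum_(z : Z) M z i j = (i == j)%:R).

Definition proj (T : finType) (psi : T -> C) : op T := fun i j => psi i * conjc (psi j).
Definition trace_mul (T : finType) (A B : op T) : C :=
  \sum_(i : T) \sum_(j : T) A i j * B j i.

Definition anti_dist (X T : finType) (q : X -> R) (rho : X -> op T) : R :=
  1 - inf [set s : R | exists M : X -> op T, povm M /\
           s = \sum_(z : X) fmin (fun x => q x * complex.Re (trace_mul (rho x) (M z)))].

(* |psi_x> = cos(theta/2)|0> + (-1)^x sin(theta/2)|1>, basis |0>=false, |1>=true *)
Definition qubit_state (theta : R) (x : bool) : bool -> C :=
  fun b => if b then real_complex R ((-1) ^+ x * sin (theta / 2)) else real_complex R (cos (theta / 2)).

(* N-bit strings: inputs x = (x_1..x_N), outcomes z, and computational basis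
   of the N-qubit space (C^2)^{\otimes N} *)
Definition bits (N : nat) := {ffun 'I_N -> bool}.

Definition tensor_state (N : nat) (theta : R) (x : bits N) : bits N -> C :=
  fun b => \prod_(i < N) qubit_state theta (x i) (b i).

Definition successQ (N : nat) (theta : R) (M : bits N -> op (bits N)) : R :=
  1 - \sum_(x : bits N) (2^-1) ^+ N * complex.Re (expect (tensor_state theta x) (M x)).

Definition A_Q (theta : R) : R :=
  anti_dist (fun _ : bool => 2^-1) (fun x => proj (qubit_state theta x)).

(* A classical strategy: sender i has a finite message alphabet Msg i,
   an encoder pe i : x_i -> distribution on Msg i, and the receiver a decoder
   pd : (m_1..m_N) -> distribution on outcomes z. *)
Definition stochastic (X Y : finType) (p : X -> Y -> R) : Prop :=
  (forall x y, 0 <= p x y) /\ (forall x, \sum_(y : Y) p x y = 1).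

Definition classical_strategy (N : nat) (Msg : 'I_N -> finType)
  (pe : forall i : 'I_N, bool -> Msg i -> R)
  (pd : {dffun forall i : 'I_N, Msg i} -> bits N -> R) : Prop :=
  (forall i, stochastic (pe i)) /\ stochastic pd.

Definition probC (N : nat) (Msg : 'I_N -> finType)
  (pe : forall i : 'I_N, bool -> Msg i -> R)
  (pd : {dffun forall i : 'I_N, Msg i} -> bits N -> R) (z x : bits N) : R :=
  \sum_(m : {dffun forall i : 'I_N, Msg i}) (\prod_(i < N) pe i (x i) (m i)) * pd m z.

Definition successC (N : nat) (Msg : 'I_N -> finType)
  (pe : forall i : 'I_N, bool -> Msg i -> R)
  (pd : {dffun forall i : 'I_N, Msg i} -> bits N -> R) : R :=
  1 - \sum_(x : bits N) (2^-1) ^+ N * probC pe pd x x.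

Definition anti_distC (Msg : finType) (pe : bool -> Msg -> R) : R :=
  1 - \sum_(m : Msg) fmin (fun x : bool => 2^-1 * pe x m).

Definition A_C (N : nat) : R :=
  inf [set A : R | exists (Msg : 'I_N -> finType)
         (pe : forall i : 'I_N, bool -> Msg i -> R)
         (pd : {dffun forall i : 'I_N, Msg i} -> bits N -> R),
         classical_strategy pe pd /\ successC pe pd = 1 /\
         forall i : 'I_N, anti_distC (pe i) = A].

End Defs.

(* Classically, a sender whose anti-distinguishability is below 1 has a message that
   both of its inputs produce with positive probability.  If every sender has one, the
   receiver outputs some z with positive probability on that message tuple, and z is
   then wrongly output on input z; so perfect anti-distinguishing forces A^C = 1.

   Quantumly, |psi_x> has amplitude (-1)^(x.j) c^(N-|j|) s^(|j|) on the basis vector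
   |j>, where c = cos(theta/2) and s = sin(theta/2).  Measuring in the Hadamard basis
   twisted by unit phases zeta_j excludes every x at once as soon as
   sum_j zeta_j c^(N-|j|) s^(|j|) = 0.  Grouping j into the zero string, the nonzero
   strings of even weight and those of odd weight, the three group totals are c^N,
   ((c+s)^N + (c-s)^N)/2 - c^N and ((c+s)^N - (c-s)^N)/2; they satisfy the triangle
   inequalities exactly when 2 c^N <= (c+s)^N, i.e. tan(theta/2) >= 2^(1/N) - 1, and
   then phases closing the triangle exist.

   For a single qubit the Hadamard measurement attains (1 + sin theta)/2, which is
   optimal because positivity of each POVM element bounds its off-diagonal entries by
   its diagonal ones. *)

From Pilot Require Import Defs.
From HB Require Import structures.
From mathcomp Require Import all_boot all_order all_algebra.
From mathcomp Require Import all_classical all_reals.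
From mathcomp Require Import exp trigo.
From mathcomp Require Import complex.
From mathcomp Require Import ring lra.
Import Order.TTheory GRing.Theory Num.Theory.
Local Open Scope ring_scope.
Set Implicit Arguments.
Unset Strict Implicit.

Section RealFacts.
Local Open Scope classical_set_scope.
Variable R : realType.

Lemma lbound_mem_inf (S : set R) (x : R) : S x -> lbound S x -> inf S = x.
Proof.
move=> Sx lbx; apply/eqP; rewrite eq_le lb_le_inf ?andbT //; last by exists x.
by apply: ge_inf => //; exists x.
Qed.

Lemma fmin_bool (f : bool -> R) : fmin f = Num.min (f false) (f true).
Proof.
apply: lbound_mem_inf; first by case: leP => _; [exists false | exists true].
by move=> _ [[|] _ <-]; rewrite ge_min lexx ?orbT.
Qed.

Lemma sqrt_half_sqr : Num.sqrt 2^-1 ^+ 2 = 2^-1 :> R.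
Proof. by rewrite sqr_sqrtr // invr_ge0. Qed.

Lemma root_ge1 (x : R) (n : nat) : 1 <= x -> 1 <= x `^ n%:R^-1.
Proof. by move=> x_ge1; rewrite -[X in X <= _](powRr0 x); apply: ler_powR; rewrite ?invr_ge0. Qed.

Lemma root_expr (x : R) (n : nat) : 0 <= x -> (0 < n)%N -> (x `^ n%:R^-1) ^+ n = x.
Proof.
move=> x_ge0 n_gt0.
by rewrite -powR_mulrn ?powR_ge0 // -powRrM mulVf ?powRr1 // pnatr_eq0 -lt0n.
Qed.

End RealFacts.

Section Trigonometry.
Variable R : realType.
Implicit Types (a x theta : R).

Lemma sin_double_half theta : sin theta = 2 * sin (theta / 2) * cos (theta / 2).
Proof. by rewrite {1}[theta]splitr -mulr2n sin_mulr2n; ring. Qed.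

Lemma cos_double_half theta : cos theta = cos (theta / 2) ^+ 2 - sin (theta / 2) ^+ 2.
Proof. by rewrite {1}[theta]splitr -mulr2n cos_mulr2n cos2sin2; ring. Qed.

Lemma half_angle_bounds theta : 0 <= theta -> theta < pi / 2 ->
  [/\ 0 < cos (theta / 2), 0 <= sin (theta / 2) & sin (theta / 2) < cos (theta / 2)].
Proof.
move=> theta_ge0 theta_lt; have pi_gt0 := pi_gt0 R.
have c_gt0 : 0 < cos (theta / 2) by apply: cos_gt0_pihalf; apply/andP; split; lra.
have s_ge0 : 0 <= sin (theta / 2) by apply: sin_ge0_pi; apply/andP; split; lra.
split=> //; have : 0 < cos theta by apply: cos_gt0_pihalf; apply/andP; split; lra.
rewrite cos_double_half; nra.
Qed.

Lemma sin_acute_lt1 theta : 0 <= theta -> theta < pi / 2 -> sin theta < 1.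
Proof.
move=> theta_ge0 theta_lt; have [c_gt0 s_ge0 s_lt_c] := half_angle_bounds theta_ge0 theta_lt.
by rewrite sin_double_half; have := cos2Dsin2 (theta / 2); nra.
Qed.

Lemma le_tan_atan a x : atan a <= x -> x < pi / 2 -> a <= tan x.
Proof.
move=> atan_le x_lt; rewrite -[a]atanK leNgt; apply/negP.
have x_itv : x \in `](- (pi / 2)), (pi / 2)[.
  by rewrite in_itv /= x_lt andbT (lt_le_trans (atan_gtNpi2 a)).
have atan_itv : atan a \in `](- (pi / 2)), (pi / 2)[.
  by rewrite in_itv /= atan_gtNpi2 atan_ltpi2.
by rewrite ltr_tan // ltNge atan_le.
Qed.

Lemma threshold_ge0 (N : nat) : 0 <= 2 * atan (2 `^ N%:R^-1 - 1) :> R.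
Proof.
rewrite mulr_ge0 // -atan0; apply: le_atan.
by rewrite subr_ge0 root_ge1 // ler1n.
Qed.

Lemma le_cos_half_pow (N : nat) theta : (0 < N)%N ->
  2 * atan (2 `^ N%:R^-1 - 1) <= theta -> theta < pi / 2 ->
  2 * cos (theta / 2) ^+ N <= (cos (theta / 2) + sin (theta / 2)) ^+ N.
Proof.
move=> N_gt0 theta_ge theta_lt.
have theta_ge0 : 0 <= theta by have := threshold_ge0 N; lra.
have [c_gt0 s_ge0 _] := half_angle_bounds theta_ge0 theta_lt.
move: theta_ge; set p : R := 2 `^ N%:R^-1 => theta_ge.
have p_ge1 : 1 <= p by rewrite root_ge1 // ler1n.
have : p - 1 <= tan (theta / 2) by apply: le_tan_atan; [lra | have := pi_gt0 R; lra].
rewrite /tan ler_pdivlMr // => tan_ge.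
rewrite -[X in X * _ <= _](root_expr (ler0n R 2) N_gt0) -/p -exprMn lerXn2r ?nnegrE; nra.
Qed.

End Trigonometry.

Section Classical.
Variable R : realType.

Lemma anti_distC_neq1_overlap (Msg : finType) (pe : bool -> Msg -> R) :
  (forall x m, 0 <= pe x m) -> anti_distC pe != 1 ->
  exists m, 0 < pe false m /\ 0 < pe true m.
Proof.
move=> pe_ge0 A_neq1.
have min_ge0 m : 0 <= fmin (fun x => 2^-1 * pe x m).
  by rewrite fmin_bool le_min !mulr_ge0 ?invr_ge0 ?pe_ge0.
have sum_neq0 : \sum_m fmin (fun x => 2^-1 * pe x m) <> 0.
  by move=> sum0; move: A_neq1; rewrite /anti_distC sum0 subr0 eqxx.
have [m /= min_gt0] := psumr_neq0P (fun m _ => min_ge0 m) sum_neq0.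
exists m; move: min_gt0 (min_ge0 m).
by rewrite fmin_bool lt_min !pmulr_rgt0 ?invr_gt0 // => /andP[].
Qed.

Lemma successC_lt1 (N : nat) (Msg : 'I_N -> finType)
    (pe : forall i : 'I_N, bool -> Msg i -> R)
    (pd : {dffun forall i : 'I_N, Msg i} -> bits N -> R) :
  classical_strategy pe pd ->
  (forall i, exists m, 0 < pe i false m /\ 0 < pe i true m) ->
  successC pe pd < 1.
Proof.
move=> [pe_st [pd_ge0 pd_sum1]] overlap.
have pe_ge0 i x m : 0 <= pe i x m by case: (pe_st i) => ->.
have /all_sig[m0 m0_pos] : forall i, {m | 0 < pe i false m /\ 0 < pe i true m}.
  by move=> i; apply/cid/overlap.
pose m : {dffun forall i : 'I_N, Msg i} := [ffun i => m0 i].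
have pd_sum_neq0 : \sum_z pd m z <> 0 by rewrite pd_sum1; exact/eqP/oner_neq0.
have [z /= pd_gt0] := psumr_neq0P (fun z _ => pd_ge0 m z) pd_sum_neq0.
have term_ge0 (x : bits N) (m' : {dffun forall i : 'I_N, Msg i}) :
    0 <= (\prod_i pe i (x i) (m' i)) * pd m' x.
  by rewrite mulr_ge0 ?prodr_ge0.
have probC_gt0 : 0 < probC pe pd z z.
  rewrite /probC (bigD1 m) //=; apply: ltr_pwDl.
    apply: mulr_gt0 => //; apply: prodr_gt0 => i _.
    by rewrite ffunE; case: (z i); case: (m0_pos i).
  by apply: sumr_ge0 => m' _; apply: term_ge0.
rewrite /successC gtrBl (bigD1 z) //=; apply: ltr_pwDl.
  by rewrite mulr_gt0 ?exprn_gt0 ?invr_gt0.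
apply: sumr_ge0 => x _; rewrite mulr_ge0 ?exprn_ge0 ?invr_ge0 //.
by apply: sumr_ge0 => m' _; apply: term_ge0.
Qed.

Lemma anti_distC_eq1_of_perfect (N : nat) (Msg : 'I_N -> finType)
    (pe : forall i : 'I_N, bool -> Msg i -> R)
    (pd : {dffun forall i : 'I_N, Msg i} -> bits N -> R) (A : R) :
  classical_strategy pe pd -> successC pe pd = 1 ->
  (forall i, anti_distC (pe i) = A) -> A = 1.
Proof.
move=> strat succ1 pe_A; apply/eqP/negPn/negP => A_neq1.
have overlap i : exists m, 0 < pe i false m /\ 0 < pe i true m.
  apply: anti_distC_neq1_overlap; last by rewrite pe_A.
  by case: strat => /(_ i)[].
by move: (successC_lt1 strat overlap); rewrite succ1 ltxx.
Qed.

Lemma exists_perfect_classical_strategy (N : nat) : (0 < N)%N ->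
  exists (Msg : 'I_N -> finType) (pe : forall i : 'I_N, bool -> Msg i -> R)
         (pd : {dffun forall i : 'I_N, Msg i} -> bits N -> R),
    [/\ classical_strategy pe pd, successC pe pd = 1 &
        forall i, anti_distC (pe i) = 1].
Proof.
move=> N_gt0; pose i0 := Ordinal N_gt0.
pose pe (i : 'I_N) (x m : bool) : R := if m == x then 1 else 0.
pose pd (m : {dffun 'I_N -> bool}) (z : bits N) : R :=
  \prod_i if z i == ~~ m i then 1 else 0.
exists (fun=> bool), pe, pd; split.
- split=> [i|]; split=> [x y|x].
  + by rewrite /pe; case: eqP.
  + by rewrite /pe -big_mkcond big_pred1_eq.
  + by apply: prodr_ge0 => i _; case: eqP.
  rewrite /pd -(bigA_distr_bigA (fun i y => if y == ~~ x i then 1 else 0 : R)) /=.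
  by apply: big1 => i _; rewrite -big_mkcond big_pred1_eq.
- rewrite /successC big1 ?subr0 // => x _; rewrite /probC big1 ?mulr0 // => m _.
  rewrite /pd (bigD1 i0) // [X in _ * X](bigD1 i0) //= /pe.
  by case: (m i0); case: (x i0); rewrite ?mul0r ?mulr0.
- move=> i; rewrite /anti_distC big1 ?subr0 // => m _.
  rewrite fmin_bool /pe; case: m; rewrite /= mulr0 mulr1.
    by rewrite min_l // invr_ge0 ler0n.
  by rewrite min_r // invr_ge0 ler0n.
Qed.

Lemma A_C_eq1 (N : nat) : (0 < N)%N -> A_C R N = 1.
Proof.
move=> /exists_perfect_classical_strategy[Msg [pe [pd [strat succ1 pe_A]]]].
apply: lbound_mem_inf; first by exists Msg, pe, pd.
move=> A [Msg' [pe' [pd' [strat' [succ1' pe'_A]]]]].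
by rewrite (anti_distC_eq1_of_perfect strat' succ1' pe'_A).
Qed.

End Classical.

Section Operators.
Variable R : realType.
Local Notation C := R[i].
Local Open Scope complex_scope.

Lemma Re_sum (I : finType) (F : I -> C) : complex.Re (\sum_i F i) = \sum_i complex.Re (F i).
Proof. by elim/big_rec2: _ => // i y z _ <-; case: (F i); case: z. Qed.

Lemma Re_realM (k : R) (z : C) : complex.Re (k%:C * z) = k * complex.Re z.
Proof. by case: z => a b /=; rewrite mul0r subr0. Qed.

Lemma conjc_realM (k : R) (z : C) : conjc (k%:C * z) = k%:C * conjc z.
Proof. by case: z => a b; apply/eqP; rewrite eq_complex /= !mul0r !subr0 !addr0 mulrN !eqxx. Qed.

Lemma trace_mul_proj (T : finType) (psi : T -> C) (A : op R T) :
  trace_mul (Defs.proj psi) A = expect psi A.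
Proof.
rewrite /trace_mul /expect exchange_big; apply: eq_bigr => j _.
by apply: eq_bigr => i _; rewrite /Defs.proj; ring.
Qed.

Lemma expect_proj (T : finType) (psi u : T -> C) :
  expect psi (Defs.proj u) = conjc (\sum_j conjc (u j) * psi j) * (\sum_j conjc (u j) * psi j).
Proof.
rewrite /expect /Defs.proj rmorph_sum mulr_suml; apply: eq_bigr => i _.
rewrite mulr_sumr; apply: eq_bigr => j _.
by rewrite rmorphM /= conjcK; ring.
Qed.

Lemma psd_proj (T : finType) (u : T -> C) : psd (Defs.proj u).
Proof.
split=> [i j|v]; first by rewrite /Defs.proj rmorphM /= conjcK mulrC.
by rewrite expect_proj mulrC mulcJ_ge0.
Qed.

Lemma povm_proj_frame (Z T : finType) (u : Z -> T -> C) :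
  (forall i j, \sum_x u x i * conjc (u x j) = (i == j)%:R) ->
  povm (fun x => Defs.proj (u x)).
Proof. by move=> frame; split=> [x|]; [exact: psd_proj | exact: frame]. Qed.

Lemma Re_expect_real (T : finType) (r : T -> R) (A : op R T) :
  complex.Re (expect (fun i => (r i)%:C) A) = \sum_i \sum_j r i * r j * complex.Re (A i j).
Proof.
rewrite /expect Re_sum; apply: eq_bigr => i _; rewrite Re_sum; apply: eq_bigr => j _.
by rewrite conjc_real mulrC mulrA -rmorphM Re_realM; ring.
Qed.

Lemma Re_expect_qubit (u : bool -> R) (A : op R bool) :
  complex.Re (expect (fun b => (u b)%:C) A) =
  u false ^+ 2 * complex.Re (A false false) + u true ^+ 2 * complex.Re (A true true)
  + u false * u true * (complex.Re (A false true) + complex.Re (A true false)).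
Proof. by rewrite Re_expect_real !big_bool /=; ring. Qed.

Lemma Re_expect_psd_ge0 (T : finType) (A : op R T) (v : T -> C) :
  psd A -> 0 <= complex.Re (expect v A).
Proof. by move=> [_ /(_ v)]; rewrite lecE => /andP[]. Qed.

Lemma psd_qubit_offdiag (A : op R bool) : psd A ->
  `|complex.Re (A false true) + complex.Re (A true false)|
    <= complex.Re (A false false) + complex.Re (A true true).
Proof.
move=> A_psd; have := Re_expect_psd_ge0 (fun=> 1%:C) A_psd.
have := Re_expect_psd_ge0 (fun b => (if b then -1 else 1)%:C) A_psd.
by rewrite !Re_expect_qubit /= ler_norml; lra.
Qed.

Lemma Re_povm_sum (Z T : finType) (M : Z -> op R T) : povm M ->
  forall i j, \sum_z complex.Re (M z i j) = (i == j)%:R.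
Proof. by move=> [_ M_id] i j; rewrite -Re_sum M_id; case: (i == j). Qed.

End Operators.

Section AntiDistinguishability.
Variable R : realType.

Definition anti_error (X T : finType) (q : X -> R) (rho : X -> op R T) (M : X -> op R T) : R :=
  \sum_z fmin (fun x => q x * complex.Re (trace_mul (rho x) (M z))).

Lemma anti_dist_optimal (X T : finType) (q : X -> R) (rho M : X -> op R T) :
  povm M -> (forall M', povm M' -> anti_error q rho M <= anti_error q rho M') ->
  anti_dist q rho = 1 - anti_error q rho M.
Proof.
move=> M_povm M_opt; rewrite /anti_dist (@lbound_mem_inf _ _ (anti_error q rho M)) //.
  by exists M.
by move=> _ [M' [/M_opt ? ->]].
Qed.

End AntiDistinguishability.

Section QubitAntiDistinguishability.
Local Open Scope complex_scope.
Variables (R : realType) (theta : R).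
Local Notation c := (cos (theta / 2)).
Local Notation s := (sin (theta / 2)).
Local Notation error M :=
  (anti_error (fun _ : bool => 2^-1) (fun x => Defs.proj (qubit_state theta x)) M).

Lemma qubit_state_real x : qubit_state theta x = (fun b => (if b then (-1) ^+ x * s else c)%:C).
Proof. by apply: funext => -[]. Qed.

Definition hadamard (z b : bool) : R[i] := ((-1) ^+ (z && b) * Num.sqrt 2^-1)%:C.

Lemma povm_hadamard : povm (fun z => Defs.proj (hadamard z)).
Proof.
apply: povm_proj_frame => i j.
rewrite (eq_bigr (fun z => ((-1) ^+ (z && i) * (-1) ^+ (z && j) / 2)%:C)); last first.
  by move=> z _; rewrite /hadamard conjc_real -rmorphM mulrACA -expr2 sqrt_half_sqr.
rewrite -rmorph_sum -(rmorph_nat (real_complex R)) big_bool; congr (_%:C).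
by case: i; case: j; rewrite /= ?expr0 ?expr1; lra.
Qed.

Lemma anti_error_hadamard :
  0 <= sin theta -> error (fun z => Defs.proj (hadamard z)) = (1 - sin theta) / 2.
Proof.
rewrite sin_double_half => sc_ge0; have := cos2Dsin2 (theta / 2).
rewrite /anti_error big_bool !fmin_bool !trace_mul_proj !qubit_state_real !Re_expect_qubit.
rewrite /Defs.proj /hadamard !conjc_real -!rmorphM /= ?expr0 ?expr1 !mul1r !mulN1r ?mulrNN.
rewrite ?mulNr ?mulrN ?opprK sqrrN -!expr2 !sqrt_half_sqr.
by rewrite !minEle; case: ifP; case: ifP; lra.
Qed.

Lemma anti_error_qubit_ge (M : bool -> op R bool) :
  povm M -> 0 <= sin theta -> (1 - sin theta) / 2 <= error M.
Proof.
move=> M_povm; have [M_psd _] := M_povm.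
rewrite sin_double_half -mulrA pmulr_rge0 // => sc_ge0.
pose a z := complex.Re (M z false false); pose d z := complex.Re (M z true true).
pose b z := complex.Re (M z false true) + complex.Re (M z true false).
have M_sum i j : complex.Re (M false i j) + complex.Re (M true i j) = (i == j)%:R.
  by rewrite -(Re_povm_sum M_povm) big_bool addrC.
have a_false : a false = 1 - a true by have := M_sum false false; rewrite /a /=; lra.
have d_false : d false = 1 - d true by have := M_sum true true; rewrite /d /=; lra.
have b_false : b false = - b true.
  by rewrite /b; have := M_sum false true; have := M_sum true false; rewrite /=; lra.
have /andP[b_ge b_le] : - 1 <= b true <= 1.
  rewrite -ler_norml.
  move: (psd_qubit_offdiag (M_psd true)) (psd_qubit_offdiag (M_psd false)).
  rewrite -/(a true) -/(a false) -/(d true) -/(d false) -/(b true) -/(b false).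
  by rewrite b_false normrN a_false d_false; lra.
have : 0 <= s * c * (1 - b true) by rewrite mulr_ge0 // subr_ge0.
have : 0 <= s * c * (1 + b true) by rewrite mulr_ge0 // -lerBlDl sub0r.
have := cos2Dsin2 (theta / 2).
rewrite /anti_error big_bool !fmin_bool !trace_mul_proj !qubit_state_real !Re_expect_qubit.
rewrite /= ?expr0 ?expr1 !mul1r !mulN1r sqrrN.
rewrite -/(a true) -/(a false) -/(d true) -/(d false) -/(b true) -/(b false).
by rewrite a_false d_false b_false !minEle; case: ifP; case: ifP; lra.
Qed.

Lemma A_Q_eq : 0 <= sin theta -> A_Q theta = (1 + sin theta) / 2.
Proof.
move=> sin_ge0; rewrite /A_Q (anti_dist_optimal povm_hadamard).
  by rewrite anti_error_hadamard //; lra.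
by move=> M /anti_error_qubit_ge; rewrite anti_error_hadamard //; apply.
Qed.

End QubitAntiDistinguishability.

Section UnitPhases.
Local Open Scope complex_scope.
Variable R : realType.

Lemma unit_phase_of_norm (a b r : R) : a ^+ 2 + b ^+ 2 = r ^+ 2 ->
  exists al : R[i], al * conjc al = 1 /\ al * r%:C = a +i* b.
Proof.
have [-> ab0|r_neq0 abr] := eqVneq r 0.
  have [-> ->] : a = 0 /\ b = 0 by rewrite expr0n /= in ab0; split; nra.
  by exists 1; rewrite conjc1 mulr1 mul1r.
have unit : (a / r) ^+ 2 + (b / r) ^+ 2 = 1.
  by rewrite !expr_div_n -mulrDl abr divff // expf_neq0.
exists ((a / r) +i* (b / r)); split; apply/eqP; rewrite eq_complex /=; apply/andP.
  by split; apply/eqP; [rewrite -unit|]; ring.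
by rewrite mulr0 subr0 mulr0 add0r !divfK.
Qed.

Lemma triangle_unit_phases (u v w : R) : 0 < u -> 0 <= v -> 0 <= w ->
  u <= v + w -> v <= w + u -> w <= u + v ->
  exists al be : R[i], [/\ al * conjc al = 1, be * conjc be = 1 &
    u%:C + al * v%:C + be * w%:C = 0].
Proof.
move=> u_gt0 v_ge0 w_ge0 le_u le_v le_w.
(* [al * v = p +i* q] is the second side of a triangle whose first side [u] lies on the
   real axis; Heron's formula shows that its height [q] is real. *)
pose p := (w ^+ 2 - v ^+ 2 - u ^+ 2) / (2 * u).
have p_def : 2 * u * p = w ^+ 2 - v ^+ 2 - u ^+ 2.
  by rewrite /p mulrC divfK // mulf_neq0 // gt_eqF.
have heron : (2 * u) ^+ 2 * (v ^+ 2 - p ^+ 2) =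
    ((v + u - w) * (v + u + w)) * ((w - v + u) * (w + v - u)).
  by rewrite /p; field; rewrite gt_eqF.
have q2_ge0 : 0 <= v ^+ 2 - p ^+ 2.
  have : 0 <= (2 * u) ^+ 2 * (v ^+ 2 - p ^+ 2) by rewrite heron !mulr_ge0 //; lra.
  by rewrite pmulr_rge0 // exprn_gt0 // mulr_gt0.
pose q := Num.sqrt (v ^+ 2 - p ^+ 2).
have q2 : q ^+ 2 = v ^+ 2 - p ^+ 2 by rewrite sqr_sqrtr.
have [al [al_unit al_v]] := @unit_phase_of_norm p q v ltac:(lra).
have [be [be_unit be_w]] : exists be : R[i], be * conjc be = 1 /\ be * w%:C = - (u + p) +i* - q.
  by apply: unit_phase_of_norm; rewrite !sqrrN q2; nra.
exists al, be; split => //; rewrite al_v be_w.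
by apply/eqP; rewrite eq_complex /=; apply/andP; split; apply/eqP; ring.
Qed.

End UnitPhases.

Section ParityBasis.
Local Open Scope complex_scope.
Context {R : realType} {N : nat}.
Implicit Types (c s : R) (x j : bits N).

Definition parity_sign x j : R := \prod_k (if x k && j k then -1 else 1).
Definition parity j : R := \prod_k (if j k then -1 else 1).
Definition amplitude c s j : R := \prod_k (if j k then s else c).
Definition zero_bits : bits N := [ffun=> false].

Lemma sum_bits_prod (F : 'I_N -> bool -> R) :
  \sum_(x : bits N) \prod_k F k (x k) = \prod_k (F k false + F k true).
Proof. by rewrite -bigA_distr_bigA; apply: eq_bigr => k _; rewrite big_bool addrC. Qed.

Lemma parity_signK x j : parity_sign x j * parity_sign x j = 1.
Proof.
by rewrite -big_split; apply: big1 => k _; case: (x k && j k); rewrite /= ?mulrNN mulr1.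
Qed.

Lemma sum_parity_sign i j : \sum_x parity_sign x i * parity_sign x j = 2 ^+ N * (i == j)%:R.
Proof.
pose F k y : R := (if y && i k then -1 else 1) * (if y && j k then -1 else 1).
rewrite (eq_bigr (fun x => \prod_k F k (x k))) => [|x _]; last by rewrite big_split.
rewrite sum_bits_prod /F /=.
have [<-|neq_ij] := eqVneq i j.
  rewrite /= (eq_bigr (fun=> 2)) ?prodr_const ?card_ord ?mulr1 // => k _.
  by case: (i k); rewrite ?mulrNN mulr1.
have [k neq_k] : exists k, i k != j k.
  apply/existsP; apply: contraNT neq_ij; rewrite negb_exists => /forallP ij.
  by apply/eqP/ffunP => k; apply/eqP/negbNE.
rewrite mulr0 (bigD1 k) //=; move: neq_k.
by case: (i k); case: (j k); rewrite //= ?mulr1 ?mul1r addrN mul0r.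
Qed.

Lemma sum_amplitude c s : \sum_j amplitude c s j = (c + s) ^+ N.
Proof. by rewrite (sum_bits_prod (fun _ b => if b then s else c)) prodr_const card_ord addrC. Qed.

Lemma sum_parity_amplitude c s : \sum_j parity j * amplitude c s j = (c - s) ^+ N.
Proof.
pose F (k : 'I_N) y : R := (if y then -1 else 1) * (if y then s else c).
rewrite (eq_bigr (fun j => \prod_k F k (j k))) => [|j _]; last by rewrite big_split.
by rewrite sum_bits_prod /F /= prodr_const card_ord mulN1r mul1r addrC.
Qed.

Lemma parityN1 j : parity j != 1 -> parity j = -1.
Proof.
suff: parity j = 1 \/ parity j = -1 by case=> ->; rewrite ?eqxx.
apply: (big_ind (fun r : R => r = 1 \/ r = -1)); first by left.
  by move=> _ _ [] -> [] ->; rewrite /= ?mulr1 ?mulrNN ?mulr1 ?mul1r; [left|right|right|left].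
by move=> k _; case: (j k); [right|left].
Qed.

Lemma parity_zero : parity zero_bits = 1.
Proof. by apply: big1 => k _; rewrite ffunE. Qed.

Lemma amplitude_zero c s : amplitude c s zero_bits = c ^+ N.
Proof.
by rewrite /amplitude (eq_bigr (fun=> c)) ?prodr_const ?card_ord // => k _; rewrite ffunE.
Qed.

Lemma amplitude_ge0 c s j : 0 <= c -> 0 <= s -> 0 <= amplitude c s j.
Proof. by move=> c_ge0 s_ge0; apply: prodr_ge0 => k _; case: (j k). Qed.

Lemma sum_bits_parity_split (V : nmodType) (F : bits N -> V) :
  \sum_j F j = F zero_bits + \sum_(j | (j != zero_bits) && (parity j == 1)) F j
                           + \sum_(j | (j != zero_bits) && (parity j != 1)) F j.
Proof. by rewrite (bigD1 zero_bits) //= (bigID (fun j => parity j == 1)) /= addrA. Qed.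

Definition even_mass c s := \sum_(j | (j != zero_bits) && (parity j == 1)) amplitude c s j.
Definition odd_mass c s := \sum_(j | (j != zero_bits) && (parity j != 1)) amplitude c s j.

Lemma masses_add c s : c ^+ N + even_mass c s + odd_mass c s = (c + s) ^+ N.
Proof. by rewrite -sum_amplitude (sum_bits_parity_split (amplitude c s)) amplitude_zero. Qed.

Lemma masses_sub c s : c ^+ N + even_mass c s - odd_mass c s = (c - s) ^+ N.
Proof.
rewrite -sum_parity_amplitude (sum_bits_parity_split (fun j => parity j * amplitude c s j)).
rewrite parity_zero mul1r amplitude_zero -sumrN.
congr (_ + _ + _); apply: eq_bigr => j /andP[_].
  by move/eqP->; rewrite mul1r.
by move/parityN1->; rewrite mulN1r.
Qed.

Lemma exists_balancing_phases c s : 0 < c -> 0 <= s -> s <= c ->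
  2 * c ^+ N <= (c + s) ^+ N ->
  exists zeta : bits N -> R[i],
    (forall j, zeta j * conjc (zeta j) = 1) /\ \sum_j (amplitude c s j)%:C * zeta j = 0.
Proof.
move=> c_gt0 s_ge0 s_le_c two_le.
have [even_ge0 odd_ge0] : 0 <= even_mass c s /\ 0 <= odd_mass c s.
  by split; apply: sumr_ge0 => j _; rewrite amplitude_ge0 // ltW.
have cmsN_ge0 : 0 <= (c - s) ^+ N by rewrite exprn_ge0 // subr_ge0.
have cmsN_le : (c - s) ^+ N <= c ^+ N by rewrite lerXn2r ?nnegrE; lra.
have := masses_add c s; have := masses_sub c s => sub add.
have [al [be [al_unit be_unit closed]]] :=
  triangle_unit_phases (exprn_gt0 N c_gt0) even_ge0 odd_ge0 ltac:(lra) ltac:(lra) ltac:(lra).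
pose zeta j := if j == zero_bits then 1 else if parity j == 1 then al else be.
exists zeta; split.
  by move=> j; rewrite /zeta; case: ifP => _; [rewrite conjc1 mulr1 | case: ifP].
rewrite -[RHS]closed (sum_bits_parity_split (fun j => (amplitude c s j)%:C * zeta j)).
rewrite /zeta eqxx mulr1 amplitude_zero /even_mass /odd_mass !rmorph_sum !mulr_sumr.
congr (_ + _ + _); apply: eq_bigr => j /andP[/negbTE -> ].
  by move=> ->; rewrite mulrC.
by move/negbTE ->; rewrite mulrC.
Qed.

End ParityBasis.

Section ExclusionMeasurement.
Local Open Scope complex_scope.
Variables (R : realType) (N : nat) (theta : R).
Local Notation c := (cos (theta / 2)).
Local Notation s := (sin (theta / 2)).
Implicit Types (x j : bits N) (zeta : bits N -> R[i]).

Definition phased_hadamard zeta x j : R[i] :=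
  (parity_sign x j * Num.sqrt 2^-1 ^+ N)%:C * conjc (zeta j).

Lemma povm_phased_hadamard zeta : (forall j, zeta j * conjc (zeta j) = 1) ->
  povm (fun x => Defs.proj (phased_hadamard zeta x)).
Proof.
move=> zeta_unit; apply: povm_proj_frame => i j.
have sqrtN : Num.sqrt 2^-1 ^+ N * Num.sqrt 2^-1 ^+ N = 2^-1 ^+ N :> R.
  by rewrite -exprMn -expr2 sqrt_half_sqr.
rewrite (eq_bigr (fun x =>
    ((parity_sign x i * parity_sign x j) * 2^-1 ^+ N)%:C * (conjc (zeta i) * zeta j))); last first.
  by move=> x _; rewrite /phased_hadamard conjc_realM conjcK -sqrtN !rmorphM; ring.
rewrite -mulr_suml -rmorph_sum -mulr_suml sum_parity_sign exprVn mulrAC.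
rewrite mulfV ?expf_neq0 ?pnatr_eq0 // mul1r rmorph_nat.
have [<-|_] := eqVneq i j; last by rewrite mul0r.
by rewrite mul1r mulrC zeta_unit.
Qed.

Lemma tensor_state_real x j : tensor_state theta x j = (parity_sign x j * amplitude c s j)%:C.
Proof.
rewrite /tensor_state /parity_sign /amplitude -big_split rmorph_prod; apply: eq_bigr => k _.
by rewrite qubit_state_real; case: (x k); case: (j k); rewrite /= ?mul1r ?mulN1r.
Qed.

Lemma expect_phased_hadamard zeta x : \sum_j (amplitude c s j)%:C * zeta j = 0 ->
  expect (tensor_state theta x) (Defs.proj (phased_hadamard zeta x)) = 0.
Proof.
move=> balanced; pose r : R := Num.sqrt 2^-1 ^+ N.
suff overlap0 : \sum_j conjc (phased_hadamard zeta x j) * tensor_state theta x j = 0.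
  by rewrite expect_proj overlap0 mulr0.
rewrite (eq_bigr (fun j => r%:C * ((amplitude c s j)%:C * zeta j))) => [|j _].
  by rewrite -mulr_sumr balanced mulr0.
rewrite /phased_hadamard conjc_realM conjcK tensor_state_real.
transitivity ((parity_sign x j * parity_sign x j)%:C * (r%:C * ((amplitude c s j)%:C * zeta j))).
  by rewrite !rmorphM; ring.
by rewrite parity_signK rmorph1 mul1r.
Qed.

Lemma exists_perfect_exclusion :
  0 < c -> 0 <= s -> s <= c -> 2 * c ^+ N <= (c + s) ^+ N ->
  exists M : bits N -> op R (bits N),
    [/\ povm M, forall x, expect (tensor_state theta x) (M x) = 0 & successQ theta M = 1].
Proof.
move=> c_gt0 s_ge0 s_le_c two_le.
have [zeta [zeta_unit balanced]] := exists_balancing_phases c_gt0 s_ge0 s_le_c two_le.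
have excluded x := expect_phased_hadamard x balanced.
exists (fun x => Defs.proj (phased_hadamard zeta x)); split => //.
  exact: povm_phased_hadamard.
by rewrite /successQ big1 ?subr0 // => x _; rewrite excluded mulr0.
Qed.

End ExclusionMeasurement.

Unset Implicit Arguments.

Theorem theorem2 (R : realType) (N : nat) (theta : R) :
  (1 <= N)%N ->
  2 * atan (2 `^ (N%:R)^-1 - 1) <= theta ->
  theta < pi / 2 ->
  (exists M : bits N -> op R (bits N),
      povm M /\
      (forall x : bits N, expect (tensor_state theta x) (M x) = 0) /\
      successQ theta M = 1) /\
  A_Q theta = (1 + sin theta) / 2 /\
  A_C R N = 1 /\
  (A_C R N / A_Q theta) ^+ N = (2 / (1 + sin theta)) ^+ N /\
  1 < (2 / (1 + sin theta)) ^+ N.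
Proof.
move=> N_gt0 theta_ge theta_lt.
have theta_ge0 : 0 <= theta by have := @threshold_ge0 R N; lra.
have [c_gt0 s_ge0 s_lt_c] := half_angle_bounds theta_ge0 theta_lt.
have sin_ge0 : 0 <= sin theta by rewrite sin_double_half !mulr_ge0 // ltW.
have sin_lt1 := sin_acute_lt1 theta_ge0 theta_lt.
have [M [M_povm M_excl M_succ]] :=
  exists_perfect_exclusion c_gt0 s_ge0 (ltW s_lt_c) (le_cos_half_pow N_gt0 theta_ge theta_lt).
have AQ := A_Q_eq sin_ge0; have AC := A_C_eq1 R N_gt0.
split; first by exists M.
do 2![split=> //]; split; first by rewrite AC AQ div1r invf_div.
by rewrite expr_gt1 ?divr_ge0 ?ltr_pdivlMr ?mul1r //; lra.
Qed.
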